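(* Let $G=(V,E,C,\ell)$ be an edge-labeled hypergraph with maximum hyperedge size $r$. Let $Y_{\mathrm{MV}}$ be a majority-vote clustering: for each node $u$, $Y_{\mathrm{MV}}[u]$ is a category $c$ maximizing the number of hyperedges $e\ni u$ with $\ell(e)=c$ (ties broken arbitrarily). Then $\mathrm{CatEdgeClus}(Y_{\mathrm{MV}})\le r\cdot\min_{Y:V\to C}\mathrm{CatEdgeClus}(Y)$.
   Context: An edge-labeled hypergraph $G=(V,E,C,\ell)$ consists of a finite node set $V$, a finite collection $E$ of hyperedges (nonempty subsets of $V$), a finite set $C$ of categories, and a labeling $\ell:E\to C$; $r=\max_{e\in E}|e|$. A clustering is a map $Y:V\to C$. For $e\in E$, $m_Y(e)=1$ if $Y[i]\neq\ell(e)$ for some $i\in e$, and $m_Y(e)=0$ otherwise; $\mathrm{CatEdgeClus}(Y)=\sum_{e\in E}m_Y(e)$. *)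

From mathcomp Require Import all_boot all_order.
Set Implicit Arguments. Unset Strict Implicit. Unset Printing Implicit Defensive.

(* An edge-labeled hypergraph: nodes V : finType, categories C : finType,
   hyperedges indexed by a finite type I (a finite collection, repetitions
   allowed), with hyperedge sets [edge i] and labels [lab i]. *)

Definition max_edge_size (V I : finType) (edge : I -> {set V}) : nat :=
  \max_(i : I) #|edge i|.

Definition mistake (V C I : finType) (edge : I -> {set V}) (lab : I -> C)
  (Y : V -> C) (i : I) : bool :=
  [exists v in edge i, Y v != lab i].

Definition CatEdgeClus (V C I : finType) (edge : I -> {set V}) (lab : I -> C)
  (Y : V -> C) : nat :=
  \sum_(i : I) (mistake edge lab Y i : nat).

Definition deg_cat (V C I : finType) (edge : I -> {set V}) (lab : I -> C)
  (u : V) (c : C) : nat :=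
  #|[set i : I | (u \in edge i) && (lab i == c)]|.

Definition majority_vote (V C I : finType) (edge : I -> {set V}) (lab : I -> C)
  (Y : V -> C) : Prop :=
  forall (u : V) (c : C), deg_cat edge lab u c <= deg_cat edge lab u (Y u).

(* Charge each mistaken hyperedge e to the nodes u of e with Y[u] <> l(e):
   there is at least one and at most r of them, so CatEdgeClus(Y) lies
   between 1/r times and 1 times the total charge. The charge of a node u is
   the number of hyperedges at u whose label differs from Y[u], which the
   majority vote minimises node by node; hence the total charge of Y_MV is at
   most that of any Y, which is at most r * CatEdgeClus(Y). *)
From mathcomp Require Import all_boot all_order.
Set Implicit Arguments. Unset Strict Implicit. Unset Printing Implicit Defensive.

Lemma double_count (I V : finType) (R : I -> V -> bool) :
  \sum_v #|[set i | R i v]| = \sum_i #|[set v | R i v]|.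
Proof.
under eq_bigr do rewrite -sum1dep_card.
under [RHS]eq_bigr do rewrite -sum1dep_card.
exact: (exchange_big_dep xpredT).
Qed.

Section Charging.
Variables (V C I : finType) (edge : I -> {set V}) (lab : I -> C).

Definition deg_not_cat (u : V) (c : C) : nat :=
  #|[set i | (u \in edge i) && (c != lab i)]|.

Definition wrong_nodes (Y : V -> C) (i : I) : {set V} :=
  [set v in edge i | Y v != lab i].

Lemma deg_cat_add_deg_not_cat u c :
  deg_cat edge lab u c + deg_not_cat u c = #|[set i | u \in edge i]|.
Proof.
rewrite /deg_cat /deg_not_cat -[RHS](cardsID [set i | lab i == c]); congr (_ + _).
  by apply: eq_card => i; rewrite !inE.
by apply: eq_card => i; rewrite !inE eq_sym andbC.
Qed.

Lemma majority_vote_deg_not_cat_min (Ymv : V -> C) u c :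
  majority_vote edge lab Ymv -> deg_not_cat u (Ymv u) <= deg_not_cat u c.
Proof.
move=> Hmv; rewrite -(leq_add2l (deg_cat edge lab u c)) deg_cat_add_deg_not_cat.
by rewrite -(deg_cat_add_deg_not_cat u (Ymv u)) leq_add2r Hmv.
Qed.

Lemma sum_deg_not_cat (Y : V -> C) :
  \sum_u deg_not_cat u (Y u) = \sum_i #|wrong_nodes Y i|.
Proof.
rewrite (double_count (fun i u => (u \in edge i) && (Y u != lab i))).
by apply: eq_bigr => i _; congr #|_|; apply/setP => v; rewrite !inE.
Qed.

Lemma card_wrong_nodes_gt0 (Y : V -> C) i :
  (0 < #|wrong_nodes Y i|) = mistake edge lab Y i.
Proof.
apply/card_gt0P/existsP => -[v].
  by rewrite inE => Hv; exists v.
by move=> Hv; exists v; rewrite inE.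
Qed.

Lemma CatEdgeClus_le_sum_wrong_nodes (Y : V -> C) :
  CatEdgeClus edge lab Y <= \sum_i #|wrong_nodes Y i|.
Proof.
apply: leq_sum => i _; rewrite -card_wrong_nodes_gt0.
by case: posnP => [->|].
Qed.

Lemma sum_wrong_nodes_le (Y : V -> C) :
  \sum_i #|wrong_nodes Y i| <= max_edge_size edge * CatEdgeClus edge lab Y.
Proof.
rewrite big_distrr; apply: leq_sum => i _; rewrite -card_wrong_nodes_gt0.
case: posnP => [-> // | _]; rewrite /= muln1.
apply: leq_trans (leq_bigmax i); apply: subset_leq_card.
by apply/subsetP => v; rewrite inE => /andP[].
Qed.

End Charging.

Theorem mainTheorem9 (V C I : finType) (edge : I -> {set V}) (lab : I -> C)
  (Hne : forall i : I, edge i != set0)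
  (Ymv : V -> C) (Hmv : majority_vote edge lab Ymv) :
  forall Y : V -> C,
    CatEdgeClus edge lab Ymv <= max_edge_size edge * CatEdgeClus edge lab Y.
Proof.
move=> Y; apply: leq_trans (CatEdgeClus_le_sum_wrong_nodes edge lab Ymv) _.
apply: leq_trans (sum_wrong_nodes_le edge lab Y).
rewrite -!sum_deg_not_cat; apply: leq_sum => u _.
exact: majority_vote_deg_not_cat_min.
Qed.
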